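(* Let $\Gamma$ be a totally ordered additive abelian group and $E,F$ finite disjoint sets. A function $\mu\colon\binom{E}{\ast}\times\binom{F}{\ast}\to\overline{\Gamma}$ satisfies the valuated bimatroid axioms (1) and (2) below if and only if the function $\nu\colon\binom{E\sqcup F}{|E|}\to\overline{\Gamma}$, $\nu(S)=\mu(E- S,\,S\cap F)$, is a valuated matroid of rank $|E|$ on $E\sqcup F$ with $\nu(E)=0$. Axioms: (1) $\mu(\emptyset,\emptyset)=0$. (2) For all $(I,J),(I',J')\in\binom{E}{\ast}\times\binom{F}{\ast}$: (i) if $i'\in I'- I$, then either there is $i\in I- I'$ with $\mu(I,J)+\mu(I',J')\geq\mu(I-\{i\}\cup\{i'\},J)+\mu(I'-\{i'\}\cup\{i\},J')$, or there is $j'\in J'- J$ with $\mu(I,J)+\mu(I',J')\geq\mu(I\cup\{i'\},J\cup\{j'\})+\mu(I'-\{i'\},J'-\{j'\})$; (ii) if $j\in J- J'$, then either there is $i\in I- I'$ with $\mu(I,J)+\mu(I',J')\geq\mu(I-\{i\},J-\{j\})+\mu(I'\cup\{i\},J'\cup\{j\})$, or there is $j'\in J'- J$ with $\mu(I,J)+\mu(I',J')\geq\mu(I,J-\{j\}\cup\{j'\})+\mu(I',J'-\{j'\}\cup\{j\})$.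
   Context: $\overline{\Gamma}=\Gamma\sqcup\{\infty\}$ with $\infty$ larger than every element of $\Gamma$. $\binom{E}{\ast}\times\binom{F}{\ast}$ is the set of pairs $(I,J)$ with $I\subseteq E$, $J\subseteq F$, $|I|=|J|$; $\binom{X}{r}$ is the set of $r$-element subsets of $X$. A valuated matroid of rank $r$ on a finite set $X$ is a map $\nu\colon\binom{X}{r}\to\overline{\Gamma}$, not identically $\infty$, such that for all $S,T\in\binom{X}{r}$ and every $s\in S- T$ there is $t\in T- S$ with $\nu(S)+\nu(T)\geq\nu(S-\{s\}\cup\{t\})+\nu(T-\{t\}\cup\{s\})$. *)

From mathcomp Require Import all_boot all_order all_algebra.
Set Implicit Arguments. Unset Strict Implicit. Unset Printing Implicit Defensive.
Import GRing.Theory.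
Local Open Scope ring_scope.

Definition totally_ordered_group (G : zmodType) (le : rel G) : Prop :=
  [/\ reflexive le, antisymmetric le, transitive le, total le
    & forall x y z : G, le x y -> le (x + z) (y + z)].

(* Gamma-bar = Gamma ⊔ {oo}, represented as option G with None = oo. *)
Definition gbar (G : zmodType) := option G.

Definition gbar_add (G : zmodType) (a b : gbar G) : gbar G :=
  match a, b with Some x, Some y => Some (x + y) | _, _ => None end.

Definition gbar_le (G : zmodType) (le : rel G) (a b : gbar G) : bool :=
  match a, b with
  | _, None => true
  | None, Some _ => false
  | Some x, Some y => le x y
  end.

(* Valuated matroid of rank r on the finite ground set X (a subset of a
   finite type T); nu is only relevant on r-element subsets of X. *)
Definition valuated_matroid (T : finType) (G : zmodType) (le : rel G)
    (X : {set T}) (r : nat) (nu : {set T} -> gbar G) : Prop :=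
  (exists S : {set T}, [/\ S \subset X, #|S| = r & nu S <> None]) /\
  forall S U : {set T}, S \subset X -> #|S| = r -> U \subset X -> #|U| = r ->
    forall s, s \in S :\: U -> exists2 t, t \in U :\: S &
      gbar_le le (gbar_add (nu ((S :\ s) :|: [set t])) (nu ((U :\ t) :|: [set s])))
                 (gbar_add (nu S) (nu U)).

(* (I,J) in binom(E,any) x binom(F,any): I in E, J in F, |I| = |J| *)
Definition bipair (T : finType) (E F I J : {set T}) : Prop :=
  [/\ I \subset E, J \subset F & #|I| = #|J|].

Definition valuated_bimatroid_axioms (T : finType) (G : zmodType) (le : rel G)
    (E F : {set T}) (mu : {set T} -> {set T} -> gbar G) : Prop :=
  mu set0 set0 = Some 0 /\
  forall I J I' J' : {set T}, bipair E F I J -> bipair E F I' J' ->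
    let lhs := gbar_add (mu I J) (mu I' J') in
    (forall i', i' \in I' :\: I ->
       (exists2 i, i \in I :\: I' &
          gbar_le le (gbar_add (mu ((I :\ i) :|: [set i']) J)
                               (mu ((I' :\ i') :|: [set i]) J')) lhs)
       \/
       (exists2 j', j' \in J' :\: J &
          gbar_le le (gbar_add (mu (I :|: [set i']) (J :|: [set j']))
                               (mu (I' :\ i') (J' :\ j'))) lhs))
    /\
    (forall j, j \in J :\: J' ->
       (exists2 i, i \in I :\: I' &
          gbar_le le (gbar_add (mu (I :\ i) (J :\ j))
                               (mu (I' :|: [set i]) (J' :|: [set j]))) lhs)
       \/
       (exists2 j', j' \in J' :\: J &
          gbar_le le (gbar_add (mu I ((J :\ j) :|: [set j']))
                               (mu I' ((J' :\ j') :|: [set j]))) lhs)).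

From mathcomp Require Import all_boot all_order all_algebra.
From mathcomp Require Import zify.
Set Implicit Arguments. Unset Strict Implicit. Unset Printing Implicit Defensive.
Local Open Scope ring_scope.

(* The pairs (I, J) correspond bijectively to the |E|-subsets S of E ⊔ F via
   I = E - S, J = S ∩ F, i.e. S = (E - I) ∪ J.  Under this correspondence the
   basis exchange of S against U by s ∈ S - U and t ∈ U - S becomes one of the
   four bimatroid exchanges, according to whether s and t lie in E or in F:
   s ∈ E is a row i' ∈ I' - I, s ∈ F a column j ∈ J - J', and likewise t is a
   row i ∈ I - I' or a column j' ∈ J' - J.  So the two sets of axioms are the
   same statements in different coordinates, and the order of Γ plays no role. *)

Lemma exists2_setU (T : finType) (A B C : {set T}) (P Q R : pred T) :
  C = A :|: B -> {in A, P =1 Q} -> {in B, P =1 R} ->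
  (exists2 x, x \in C & P x) <-> (exists2 x, x \in A & Q x) \/ (exists2 x, x \in B & R x).
Proof.
move=> -> PQ PR; split.
- by case=> x /setUP [xA | xB] Px; [left | right]; exists x; rewrite // -?PQ -?PR.
- case=> [[x xA Qx] | [x xB Rx]]; exists x; rewrite ?inE ?xA ?xB ?orbT //.
  + by rewrite PQ.
  + by rewrite PR.
Qed.

Local Ltac swap_setP a b :=
  let x := fresh "x" in let xa := fresh "xa" in let xb := fresh "xb" in
  split; apply/setP=> x; rewrite !inE;
  (have [->|xa] := eqVneq x a; [|have [->|xb] := eqVneq x b]);
  rewrite ?eqxx ?(negbTE xa) ?(negbTE xb);
  repeat match goal with
  | H : is_true (?y \in ?S) |- context [?y \in ?S] => rewrite H
  | H : is_true (?y \notin ?S) |- context [?y \in ?S] => rewrite (negbTE H)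
  | H : (?y \in ?S) = false |- context [?y \in ?S] => rewrite H
  | H : (?y == ?z) = false |- context [?y == ?z] => rewrite H
  end; by rewrite /= ?andbT ?orbF.

Section Swap.
Variables (T : finType) (E F : {set T}).
Hypothesis disEF : [disjoint E & F].
Variables (A : {set T}) (a b : T).
Hypotheses (aA : a \in A) (bA : b \notin A).

Let ab : (a == b) = false. Proof. by apply: contraNF bA => /eqP <-. Qed.

Lemma swap_EE : a \in E -> b \in E ->
  E :\: (A :\ a :|: [set b]) = (E :\: A) :\ b :|: [set a] /\
  (A :\ a :|: [set b]) :&: F = A :&: F.
Proof.
move=> aE bE; have aF := disjointFr disEF aE; have bF := disjointFr disEF bE.
swap_setP a b.
Qed.

Lemma swap_EF : a \in E -> b \in F ->
  E :\: (A :\ a :|: [set b]) = (E :\: A) :|: [set a] /\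
  (A :\ a :|: [set b]) :&: F = (A :&: F) :|: [set b].
Proof.
move=> aE bF; have aF := disjointFr disEF aE; have bE := disjointFl disEF bF.
swap_setP a b.
Qed.

Lemma swap_FE : a \in F -> b \in E ->
  E :\: (A :\ a :|: [set b]) = (E :\: A) :\ b /\
  (A :\ a :|: [set b]) :&: F = (A :&: F) :\ a.
Proof.
move=> aF bE; have aE := disjointFl disEF aF; have bF := disjointFr disEF bE.
swap_setP a b.
Qed.

Lemma swap_FF : a \in F -> b \in F ->
  E :\: (A :\ a :|: [set b]) = E :\: A /\
  (A :\ a :|: [set b]) :&: F = (A :&: F) :\ a :|: [set b].
Proof.
move=> aF bF; have aE := disjointFl disEF aF; have bE := disjointFl disEF bF.
swap_setP a b.
Qed.

End Swap.

Section Correspondence.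
Variables (T : finType) (E F : {set T}).
Hypothesis disEF : [disjoint E & F].

Lemma setD_EF_split (S U : {set T}) : S \subset E :|: F ->
  S :\: U = ((E :\: U) :\: (E :\: S)) :|: ((S :&: F) :\: (U :&: F)).
Proof.
move=> sS; apply/setP=> x; rewrite !inE.
case xS: (x \in S); last by rewrite andbF; case: (x \in E); rewrite ?andbF.
by case/setUP: (subsetP sS x xS) => [xE | xF];
  rewrite ?xE ?xF ?(disjointFr disEF xE) ?(disjointFl disEF xF) /= ?andbT ?andbF ?orbF.
Qed.

Lemma card_setD_EF (S : {set T}) : S \subset E :|: F -> #|S| = #|E| ->
  #|E :\: S| = #|S :&: F|.
Proof.
move=> sS cS; have SF : S :&: F = S :\: E.
  apply/setP=> x; rewrite !inE; case xS: (x \in S); rewrite ?andbF //.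
  by case/setUP: (subsetP sS x xS) => [xE | xF];
    rewrite ?xE ?xF ?(disjointFr disEF xE) ?(disjointFl disEF xF).
have := cardsID S E; have := cardsID E S; rewrite SF setIC; lia.
Qed.

Lemma bipair_of_basis (S : {set T}) : S \subset E :|: F -> #|S| = #|E| ->
  bipair E F (E :\: S) (S :&: F).
Proof. by move=> sS cS; split; [exact: subsetDl | exact: subsetIr | exact: card_setD_EF]. Qed.

Lemma basis_of_bipair (I J : {set T}) : bipair E F I J ->
  exists2 S : {set T}, S \subset E :|: F /\ #|S| = #|E| & I = E :\: S /\ J = S :&: F.
Proof.
case=> sI sJ cIJ; exists ((E :\: I) :|: J).
  split; first by apply: setUSS => //; apply: subsetDl.
  have /eqP -> : #|(E :\: I) :|: J| == (#|E :\: I| + #|J|)%N.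
    by rewrite (leq_card_setU (E :\: I) J).2 (disjointW (subsetDl E I) sJ disEF).
  by rewrite (cardsDS sI) -cIJ subnK // subset_leq_card.
split; apply/setP=> x; rewrite !inE.
- case xI: (x \in I); last by case: (x \in E); rewrite ?andbF ?andbT //=; case: (x \in J).
  have xJ := contraFF (subsetP sJ x) (disjointFr disEF (subsetP sI x xI)).
  by rewrite (subsetP sI x xI) xJ.
- case xJ: (x \in J); first by rewrite (subsetP sJ x xJ) orbT.
  by case xF: (x \in F); rewrite ?andbF // (disjointFl disEF xF) andbF.
Qed.

End Correspondence.

Lemma in_setDD (T : finType) (E S U : {set T}) x :
  (x \in (E :\: U) :\: (E :\: S)) = [&& x \in E, x \in S & x \notin U].
Proof. by rewrite !inE; case: (x \in E); rewrite ?andbT ?andbF // negbK andbC. Qed.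

Lemma in_setDI (T : finType) (F S U : {set T}) x :
  (x \in (S :&: F) :\: (U :&: F)) = [&& x \in F, x \in S & x \notin U].
Proof. by rewrite !inE; case: (x \in F); rewrite ?andbT ?andbF //= andbC. Qed.

Section Valuation.
Variables (G : zmodType) (le : rel G) (T : finType) (E F : {set T}).
Hypothesis disEF : [disjoint E & F].
Variable mu : {set T} -> {set T} -> gbar G.

Definition matroid_of_bimatroid (S : {set T}) : gbar G := mu (E :\: S) (S :&: F).
Local Notation nu := matroid_of_bimatroid.

Definition basis_exchange (S U : {set T}) (s t : T) : bool :=
  gbar_le le (gbar_add (nu (S :\ s :|: [set t])) (nu (U :\ t :|: [set s])))
             (gbar_add (nu S) (nu U)).

Definition row_exchange (I J I' J' : {set T}) (i' : T) : Prop :=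
  (exists2 i, i \in I :\: I' &
     gbar_le le (gbar_add (mu ((I :\ i) :|: [set i']) J) (mu ((I' :\ i') :|: [set i]) J'))
                (gbar_add (mu I J) (mu I' J')))
  \/
  (exists2 j', j' \in J' :\: J &
     gbar_le le (gbar_add (mu (I :|: [set i']) (J :|: [set j'])) (mu (I' :\ i') (J' :\ j')))
                (gbar_add (mu I J) (mu I' J'))).

Definition col_exchange (I J I' J' : {set T}) (j : T) : Prop :=
  (exists2 i, i \in I :\: I' &
     gbar_le le (gbar_add (mu (I :\ i) (J :\ j)) (mu (I' :|: [set i]) (J' :|: [set j])))
                (gbar_add (mu I J) (mu I' J')))
  \/
  (exists2 j', j' \in J' :\: J &
     gbar_le le (gbar_add (mu I ((J :\ j) :|: [set j'])) (mu I' ((J' :\ j') :|: [set j])))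
                (gbar_add (mu I J) (mu I' J'))).

Lemma basis_exchange_row (S U : {set T}) (s : T) :
  U \subset E :|: F -> s \in (E :\: U) :\: (E :\: S) ->
  (exists2 t, t \in U :\: S & basis_exchange S U s t) <->
  row_exchange (E :\: S) (S :&: F) (E :\: U) (U :&: F) s.
Proof.
move=> sU; rewrite in_setDD => /and3P [sE sS sU'].
apply: exists2_setU; first exact: setD_EF_split.
- move=> t; rewrite in_setDD => /and3P [tE tU tS'].
  rewrite /basis_exchange /nu.
  have [-> ->] := swap_EE disEF sS tS' sE tE.
  by have [-> ->] := swap_EE disEF tU sU' tE sE.
- move=> t; rewrite in_setDI => /and3P [tF tU tS'].
  rewrite /basis_exchange /nu.
  have [-> ->] := swap_EF disEF sS tS' sE tF.
  by have [-> ->] := swap_FE disEF tU sU' tF sE.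
Qed.

Lemma basis_exchange_col (S U : {set T}) (s : T) :
  U \subset E :|: F -> s \in (S :&: F) :\: (U :&: F) ->
  (exists2 t, t \in U :\: S & basis_exchange S U s t) <->
  col_exchange (E :\: S) (S :&: F) (E :\: U) (U :&: F) s.
Proof.
move=> sU; rewrite in_setDI => /and3P [sF sS sU'].
apply: exists2_setU; first exact: setD_EF_split.
- move=> t; rewrite in_setDD => /and3P [tE tU tS'].
  rewrite /basis_exchange /nu.
  have [-> ->] := swap_FE disEF sS tS' sF tE.
  by have [-> ->] := swap_EF disEF tU sU' tE sF.
- move=> t; rewrite in_setDI => /and3P [tF tU tS'].
  rewrite /basis_exchange /nu.
  have [-> ->] := swap_FF disEF sS tS' sF tF.
  by have [-> ->] := swap_FF disEF tU sU' tF sF.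
Qed.

Lemma nu_E : nu E = mu set0 set0.
Proof. by rewrite /nu setDv (disjoint_setI0 disEF). Qed.

Lemma matroid_of_bimatroid_axioms : valuated_bimatroid_axioms le E F mu ->
  valuated_matroid le (E :|: F) #|E| nu /\ nu E = Some 0.
Proof.
case=> mu0 ax; rewrite nu_E; split=> //; split.
  by exists E; rewrite subsetUl nu_E mu0.
move=> S U sS cS sU cU s; rewrite (setD_EF_split disEF U sS) => /setUP [sI | sJ].
- have [rowE _] := ax _ _ _ _ (bipair_of_basis disEF sS cS) (bipair_of_basis disEF sU cU).
  by apply/(basis_exchange_row sU sI); exact: rowE sI.
- have [_ colE] := ax _ _ _ _ (bipair_of_basis disEF sS cS) (bipair_of_basis disEF sU cU).
  by apply/(basis_exchange_col sU sJ); exact: colE sJ.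
Qed.

Lemma bimatroid_axioms_of_matroid : valuated_matroid le (E :|: F) #|E| nu ->
  nu E = Some 0 -> valuated_bimatroid_axioms le E F mu.
Proof.
case=> _ ex; rewrite nu_E => mu0; split=> // I J I' J'.
case/(basis_of_bipair disEF) => S [sS cS] [-> ->].
case/(basis_of_bipair disEF) => U [sU cU] [-> ->].
split=> s sIJ.
- apply/(basis_exchange_row sU sIJ)/ex => //.
  by rewrite (setD_EF_split disEF U sS) inE sIJ.
- apply/(basis_exchange_col sU sIJ)/ex => //.
  by rewrite (setD_EF_split disEF U sS) inE sIJ orbT.
Qed.

End Valuation.

Theorem proposition2p2 (G : zmodType) (le : rel G)
    (T : finType) (E F : {set T}) (mu : {set T} -> {set T} -> gbar G) :
  totally_ordered_group le ->
  [disjoint E & F] ->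
  valuated_bimatroid_axioms le E F mu <->
  (valuated_matroid le (E :|: F) #|E| (fun S => mu (E :\: S) (S :&: F)) /\
   mu (E :\: E) (E :&: F) = Some 0).
Proof.
move=> _ disEF; split; first exact: matroid_of_bimatroid_axioms.
by case; apply: bimatroid_axioms_of_matroid.
Qed.
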